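(* Let $(A,\rhd,\lhd,\succ,\prec)$ be a pre-dual pre-Poisson algebra. (a) With $x\circ y=x\rhd y+x\lhd y$ and $[x,y]=x\succ y+x\prec y$, $(A,\circ,[\cdot,\cdot])$ is a dual pre-Poisson algebra, and $(A;L_\rhd,R_\lhd,L_\succ,R_\prec)$ is a representation of $(A,\circ,[\cdot,\cdot])$. (b) Suppose moreover that $x\lhd y=y\rhd x$ and $x\prec y=-y\succ x$ for all $x,y\in A$. Then with $x\diamond y=x\succ y$ and $x\odot y=x\rhd y$, $(A,\diamond,\odot)$ is a pre-Poisson algebra, and $(A,\bullet,\{\cdot,\cdot\})$ with $x\bullet y=x\odot y+y\odot x$, $\{x,y\}=x\diamond y-y\diamond x$ is a Poisson algebra.
   Context: Field $\mathbb{F}$ of characteristic $0$. $L_\diamond(x)y=x\diamond y$, $R_\diamond(x)y=y\diamond x$. A pre-dual pre-Poisson algebra: bilinear $\rhd,\lhd,\succ,\prec$ with, for all $x,y,z$: $x\lhd(y\lhd z+y\rhd z)=(x\lhd y)\lhd z=(y\rhd x)\lhd z=y\rhd(x\lhd z)$; $x\rhd(y\rhd z)=(x\lhd y+x\rhd y)\rhd z=(y\lhd x+y\rhd x)\rhd z$; $(x\prec y+x\succ y)\succ z=x\succ(y\succ z)-y\succ(x\succ z)$; $(x\succ y)\prec z=-(y\prec x)\prec z$; $x\prec(y\prec z+y\succ z)=(x\prec y)\prec z+y\succ(x\prec z)$; $x\prec(y\rhd z+y\lhd z)=(x\prec y)\lhd z+y\rhd(x\prec z)$; $x\succ(y\lhd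 z)=(x\succ y)\lhd z+y\lhd(x\succ z+x\prec z)$; $x\succ(y\rhd z)=(x\succ y+x\prec y)\rhd z+y\rhd(x\succ z)$; $(x\lhd y)\prec z=x\lhd(y\succ z+y\prec z)+y\rhd(x\prec z)$; $(x\rhd y+x\lhd y)\succ z=x\rhd(y\succ z)+y\rhd(x\succ z)$; $(x\rhd y-y\lhd x)\prec z=0$; $(x\succ y+y\prec x)\lhd z=0$; $(x\succ y+x\prec y+y\succ x+y\prec x)\rhd z=0$. A dual pre-Poisson algebra: $x\circ(y\circ z)=(x\circ y)\circ z=(y\circ x)\circ z$; $[x,[y,z]]=[[x,y],z]+[y,[x,z]]$; $[x,y\circ z]=[x,y]\circ z+y\circ[x,z]$; $[x\circ y,z]=x\circ[y,z]+y\circ[x,z]$; $[x,y]\circ z=-[y,x]\circ z$. A representation $(V;l_\circ,r_\circ,l_{[\cdot,\cdot]},r_{[\cdot,\cdot]})$ of it: linear maps $A\to\mathrm{End}(V)$ with $r_\circ(x)r_\circ(y)=r_\circ(y\circ x)=l_\circ(y)r_\circ(x)=r_\circ(x)l_\circ(y)$; $l_\circ(x\circ y)=l_\circ(x)l_\circ(y)=l_\circ(y)l_\circ(x)$; $l_{[\cdot,\cdot]}([x,y])=l_{[\cdot,\cdot]}(x)l_{[\cdot,\cdot]}(y)-l_{[\cdot,\cdot]}(y)l_{[\cdot,\cdot]}(x)$; $r_{[\cdot,\cdot]}([x,y])=r_{[\cdot,\cdot]}(y)r_{[\cdot,\cdot]}(x)+l_{[\cdot,\cdot]}(x)r_{[\cdot,\cdot]}(y)$;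 $r_{[\cdot,\cdot]}(x)r_{[\cdot,\cdot]}(y)=-r_{[\cdot,\cdot]}(x)l_{[\cdot,\cdot]}(y)$; $r_{[\cdot,\cdot]}(x\circ y)=r_\circ(y)r_{[\cdot,\cdot]}(x)+l_\circ(x)r_{[\cdot,\cdot]}(y)$; $l_{[\cdot,\cdot]}(x)r_\circ(y)=r_\circ(y)l_{[\cdot,\cdot]}(x)+r_\circ([x,y])$; $l_{[\cdot,\cdot]}(x)l_\circ(y)=l_\circ([x,y])+l_\circ(y)l_{[\cdot,\cdot]}(x)$; $r_{[\cdot,\cdot]}(x)r_\circ(y)=r_\circ([y,x])+l_\circ(y)r_{[\cdot,\cdot]}(x)$; $l_{[\cdot,\cdot]}(x\circ y)=l_\circ(x)l_{[\cdot,\cdot]}(y)+l_\circ(y)l_{[\cdot,\cdot]}(x)$; $r_{[\cdot,\cdot]}(x)(l_\circ-r_\circ)(y)=0$; $r_\circ(x)(l_{[\cdot,\cdot]}+r_{[\cdot,\cdot]})(y)=0$; $l_\circ([x,y]+[y,x])=0$. A pre-Poisson algebra $(A,\diamond,\odot)$: $x\diamond(y\diamond z)-(x\diamond y)\diamond z=y\diamond(x\diamond z)-(y\diamond x)\diamond z$; $x\odot(y\odot z)=(x\odot y+y\odot x)\odot z$; $(x\diamond y-y\diamond x)\odot z=x\diamond(y\odot z)-y\odot(x\diamond z)$; $(x\odot y+y\odot x)\diamond z=x\odot(y\diamond z)+y\odot(x\diamond z)$. A Poisson algebra: commutative associative $\bullet$, Lie bracket $\{\cdot,\cdot\}$, $\{x,y\bullet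 z\}=\{x,y\}\bullet z+y\bullet\{x,z\}$. *)

From HB Require Import structures.
From mathcomp Require Import all_boot all_order all_algebra.
Set Implicit Arguments. Unset Strict Implicit. Unset Printing Implicit Defensive.
Import GRing.Theory.
Local Open Scope ring_scope.

Section Defs.
Variables (F : fieldType) (A : lmodType F).

Definition bilinear_op (op : A -> A -> A) : Prop :=
  (forall (a : F) x y z, op (a *: x + y) z = a *: op x z + op y z) /\
  (forall (a : F) x y z, op z (a *: x + y) = a *: op z x + op z y).

Definition pre_dual_pre_Poisson (rhd lhd succ prec : A -> A -> A) : Prop :=
  ((bilinear_op rhd) /\ (bilinear_op lhd) /\ (bilinear_op succ) /\ (bilinear_op prec) /\ (forall x y z, ((lhd x (lhd y z + rhd y z) = lhd (lhd x y) z) /\ (lhd (lhd x y) z = lhd (rhd y x) z) /\ (lhd (rhd y x) z = rhd y (lhd x z)) /\ (rhd x (rhd y z) = rhd (lhd x y + rhd x y) z) /\ (rhd (lhd x y + rhd x y) z = rhd (lhd y x + rhd y x) z) /\ (succ (prec x y + succ x y) z = succ x (succ y z) - succ y (succ x z)) /\ (prec (succ x y) z = - prec (prec y x) z) /\ (prec x (prec y z + succ y z) = prec (prec x y) z + succ y (prec x z)) /\ (prec x (rhd y z + lhd y z) = lhd (prec x y) z + rhd y (prec x z)) /\ (succ x (lhd y z) = lhd (succ x y) z + lhd y (succ x z + prec x z)) /\ (succ x (rhd y z) = rhd (succ x y + prec x y) z + rhd y (succ x z)) /\ (prec (lhd x y) z = lhd x (succ y z + prec y z) + rhd y (prec x z))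 /\ (succ (rhd x y + lhd x y) z = rhd x (succ y z) + rhd y (succ x z)) /\ (prec (rhd x y - lhd y x) z = 0) /\ (lhd (succ x y + prec y x) z = 0) /\ (rhd (succ x y + prec x y + succ y x + prec y x) z = 0)))).

Definition dual_pre_Poisson (circ br : A -> A -> A) : Prop :=
  ((bilinear_op circ) /\ (bilinear_op br) /\ (forall x y z, ((circ x (circ y z) = circ (circ x y) z) /\ (circ (circ x y) z = circ (circ y x) z) /\ (br x (br y z) = br (br x y) z + br y (br x z)) /\ (br x (circ y z) = circ (br x y) z + circ y (br x z)) /\ (br (circ x y) z = circ x (br y z) + circ y (br x z)) /\ (circ (br x y) z = - circ (br y x) z)))).

(* a linear map A -> End(V), given as l : A -> V -> V *)
Definition lin_to_end (V : lmodType F) (l : A -> V -> V) : Prop :=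
  (forall (a : F) x y v, l (a *: x + y) v = a *: l x v + l y v) /\
  (forall x (a : F) u v, l x (a *: u + v) = a *: l x u + l x v).

(* representation (V; lc, rc, lb, rb) of the dual pre-Poisson algebra (A, circ, br);
   products of endomorphisms are compositions, equalities are pointwise on V *)
Definition dpp_representation (circ br : A -> A -> A) (V : lmodType F)
    (lc rc lb rb : A -> V -> V) : Prop :=
  ((lin_to_end lc) /\ (lin_to_end rc) /\ (lin_to_end lb) /\ (lin_to_end rb) /\ (forall x y (v : V), ((rc x (rc y v) = rc (circ y x) v) /\ (rc (circ y x) v = lc y (rc x v)) /\ (lc y (rc x v) = rc x (lc y v)) /\ (lc (circ x y) v = lc x (lc y v)) /\ (lc x (lc y v) = lc y (lc x v)) /\ (lb (br x y) v = lb x (lb y v) - lb y (lb x v)) /\ (rb (br x y) v = rb y (rb x v) + lb x (rb y v)) /\ (rb x (rb y v) = - rb x (lb y v)) /\ (rb (circ x y) v = rc y (rb x v) + lc x (rb y v)) /\ (lb x (rc y v) = rc y (lb x v) + rc (br x y) v) /\ (lb x (lc y v) = lc (br x y) v + lc y (lb x v)) /\ (rb x (rc y v) = rc (br y x) v + lc y (rb x v)) /\ (lb (circ x y) v = lc x (lb y v) + lc y (lb x v)) /\ (rb x (lc y v - rc y v) = 0) /\ (rc x (lb y v + rb y v) = 0) /\ (lc (br x y + br y x) v = 0)))).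

Definition pre_Poisson (dia odot : A -> A -> A) : Prop :=
  ((bilinear_op dia) /\ (bilinear_op odot) /\ (forall x y z, ((dia x (dia y z) - dia (dia x y) z = dia y (dia x z) - dia (dia y x) z) /\ (odot x (odot y z) = odot (odot x y + odot y x) z) /\ (odot (dia x y - dia y x) z = dia x (odot y z) - odot y (dia x z)) /\ (dia (odot x y + odot y x) z = odot x (dia y z) + odot y (dia x z))))).

Definition Poisson (bullet pb : A -> A -> A) : Prop :=
  ((bilinear_op bullet) /\ (bilinear_op pb) /\ (forall x y z, ((bullet x y = bullet y x) /\ (bullet (bullet x y) z = bullet x (bullet y z)) /\ (pb x x = 0) /\ (pb x (pb y z) + pb y (pb z x) + pb z (pb x y) = 0) /\ (pb x (bullet y z) = bullet (pb x y) z + bullet y (pb x z))))).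

End Defs.

(* Every identity to be checked is a linear consequence of the axioms of a
   pre-dual pre-Poisson algebra: once the bilinear operations are expanded,
   its two sides differ by a signed sum of at most four instances of those
   axioms.  For (b), the symmetry assumptions turn four of the axioms
   literally into those of a pre-Poisson algebra (a pre-Lie product ≻ and a
   compatible Zinbiel product ▷), and, as for any pre-Poisson algebra, the
   symmetrized Zinbiel product and the commutator of the pre-Lie product
   form a Poisson algebra. *)

From HB Require Import structures.
From mathcomp Require Import all_boot all_order all_algebra.
Set Implicit Arguments.
Unset Strict Implicit.
Unset Printing Implicit Defensive.
Import GRing.Theory.
Local Open Scope ring_scope.

Section BilinearOp.
Variables (F : fieldType) (A : lmodType F).
Implicit Types (op f g : A -> A -> A) (x y z : A).

Lemma bilinear_opDl op : bilinear_op op -> forall x y z, op (x + y) z = op x z + op y z.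
Proof. by move=> [opZl _] x y z; have := opZl 1 x y z; rewrite !scale1r. Qed.

Lemma bilinear_opDr op : bilinear_op op -> forall x y z, op z (x + y) = op z x + op z y.
Proof. by move=> [_ opZr] x y z; have := opZr 1 x y z; rewrite !scale1r. Qed.

Lemma bilinear_opNl op : bilinear_op op -> forall x z, op (- x) z = - op x z.
Proof.
move=> op_bil x z.
have op0 : op 0 z = 0.
  by apply: (addrI (op 0 z)); rewrite -(bilinear_opDl op_bil) !addr0.
by apply: (addrI (op x z)); rewrite -(bilinear_opDl op_bil) !subrr.
Qed.

Lemma bilinear_opNr op : bilinear_op op -> forall x z, op z (- x) = - op z x.
Proof.
move=> op_bil x z.
have op0 : op z 0 = 0.
  by apply: (addrI (op z 0)); rewrite -(bilinear_opDr op_bil) !addr0.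
by apply: (addrI (op z x)); rewrite -(bilinear_opDr op_bil) !subrr.
Qed.

Lemma bilinear_opD f g :
  bilinear_op f -> bilinear_op g -> bilinear_op (fun x y => f x y + g x y).
Proof.
move=> [fZl fZr] [gZl gZr].
by split=> a x y z; rewrite ?fZl ?fZr ?gZl ?gZr scalerDr addrACA.
Qed.

Lemma bilinear_opN f : bilinear_op f -> bilinear_op (fun x y => - f x y).
Proof. by move=> [fZl fZr]; split=> a x y z; rewrite ?fZl ?fZr opprD scalerN. Qed.

Lemma bilinear_op_swap f : bilinear_op f -> bilinear_op (fun x y => f y x).
Proof. by move=> [fZl fZr]; split. Qed.

Lemma bilinear_op_lin_to_end op : bilinear_op op -> lin_to_end op.
Proof. by move=> [opZl opZr]; split=> *; rewrite ?opZl ?opZr. Qed.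

End BilinearOp.

Ltac expand_bilinear :=
  repeat match goal with
  | op_bil : bilinear_op ?op |- _ =>
      progress rewrite ?(bilinear_opDl op_bil) ?(bilinear_opDr op_bil)
                       ?(bilinear_opNl op_bil) ?(bilinear_opNr op_bil)
  end.

(* The sum is kept right-nested and ending in [0]; these return a proof of
   [v + r = a + (v + r')], resp. [v + r = - a + (v + r')]. *)
Ltac summand_to_front a s :=
  lazymatch s with
  | ?v + (a + _) => uconstr:(addrCA v a _)
  | ?v + ?r => let p := summand_to_front a r in
      uconstr:(etrans (congr1 (fun w => v + w) p) (addrCA v a _))
  end.

Ltac opposite_to_front a s :=
  lazymatch s with
  | ?v + (- a + _) => uconstr:(addrCA v (- a) _)
  | ?v + ?r => let p := opposite_to_front a r in
      uconstr:(etrans (congr1 (fun w => v + w) p) (addrCA v (- a) _))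
  end.

Ltac cancel_head :=
  lazymatch goal with
  | |- - ?a + (?a + _) = 0 => rewrite addKr
  | |- ?a + (- ?a + _) = 0 => rewrite addNKr
  | |- - ?a + ?s = 0 => let p := summand_to_front a s in rewrite [s](p : s = _) addKr
  | |- ?a + ?s = 0 => let p := opposite_to_front a s in rewrite [s](p : s = _) addNKr
  end.

(* Closes [s = 0] when [s], once the bilinear operations in context are
   expanded, is a sum of terms that cancel in pairs. *)
Ltac cancel_terms :=
  expand_bilinear;
  rewrite ?opprD ?opprK ?oppr0 ?addr0 -[LHS]addr0 -?addrA;
  repeat cancel_head; reflexivity.

Lemma subr0_combine (V : zmodType) (s a b : V) : a = b -> s - (a - b) = 0 -> s = 0.
Proof. by move=> ->; rewrite subrr subr0. Qed.

Ltac subtract_equation e :=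
  lazymatch goal with |- ?s = 0 => apply: (@subr0_combine _ s _ _ e) end.

(* [combine e1 .. en], with [ei : li = ri], proves [L = R] when
   [L - R - (l1 - r1) - .. - (ln - rn)] cancels term by term. *)
Tactic Notation "combine" constr(e1) :=
  apply: subr0_eq; subtract_equation e1; cancel_terms.
Tactic Notation "combine" constr(e1) constr(e2) :=
  apply: subr0_eq; subtract_equation e1; subtract_equation e2; cancel_terms.
Tactic Notation "combine" constr(e1) constr(e2) constr(e3) :=
  apply: subr0_eq; subtract_equation e1; subtract_equation e2;
  subtract_equation e3; cancel_terms.
Tactic Notation "combine" constr(e1) constr(e2) constr(e3) constr(e4) :=
  apply: subr0_eq; subtract_equation e1; subtract_equation e2;
  subtract_equation e3; subtract_equation e4; cancel_terms.

Section PrePoissonToPoisson.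
Variables (F : fieldType) (A : lmodType F) (dia odot : A -> A -> A).
Hypothesis preP : pre_Poisson dia odot.

Local Notation "x ◇ y" := (dia x y) (at level 40, left associativity).
Local Notation "x ⊙ y" := (odot x y) (at level 40, left associativity).

(* Used by [expand_bilinear], which looks for bilinearity facts in the context. *)
Let dia_bilinear : bilinear_op dia := preP.1.
Let odot_bilinear : bilinear_op odot := preP.2.1.

Let pre_Lie x y z : x ◇ (y ◇ z) - (x ◇ y) ◇ z = y ◇ (x ◇ z) - (y ◇ x) ◇ z.
Proof. by have := preP.2.2 x y z; tauto. Qed.

Let Zinbiel x y z : x ⊙ (y ⊙ z) = (x ⊙ y + y ⊙ x) ⊙ z.
Proof. by have := preP.2.2 x y z; tauto. Qed.

Let commutator_odot x y z : (x ◇ y - y ◇ x) ⊙ z = x ◇ (y ⊙ z) - y ⊙ (x ◇ z).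
Proof. by have := preP.2.2 x y z; tauto. Qed.

Let anticommutator_dia x y z : (x ⊙ y + y ⊙ x) ◇ z = x ⊙ (y ◇ z) + y ⊙ (x ◇ z).
Proof. by have := preP.2.2 x y z; tauto. Qed.

Lemma Poisson_of_pre_Poisson :
  Poisson (fun x y => x ⊙ y + y ⊙ x) (fun x y => x ◇ y - y ◇ x).
Proof.
split; first exact/bilinear_opD/bilinear_op_swap.
split; first exact/bilinear_opD/bilinear_opN/bilinear_op_swap.
move=> x y z; split; [|split; [|split; [|split]]].
- exact: addrC.
- by combine (esym (Zinbiel x y z)) (Zinbiel z x y) (esym (Zinbiel x z y)) (Zinbiel z y x).
- exact: subrr.
- by combine (pre_Lie y z x) (pre_Lie z x y) (pre_Lie x y z).
- by combine (esym (commutator_odot x y z)) (esym (commutator_odot x z y))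
             (esym (anticommutator_dia y z x)).
Qed.

End PrePoissonToPoisson.

Section PreDualPrePoisson.
Variables (F : fieldType) (A : lmodType F) (rhd lhd succ prec : A -> A -> A).
Hypothesis pdpp : pre_dual_pre_Poisson rhd lhd succ prec.

Local Notation "x ▷ y" := (rhd x y) (at level 40, left associativity).
Local Notation "x ◁ y" := (lhd x y) (at level 40, left associativity).
Local Notation "x ≻ y" := (succ x y) (at level 40, left associativity).
Local Notation "x ≺ y" := (prec x y) (at level 40, left associativity).
Local Notation "x ∘ y" := (x ▷ y + x ◁ y) (at level 40, left associativity).
Local Notation "⁅ x , y ⁆" := (x ≻ y + x ≺ y).

Let rhd_bilinear : bilinear_op rhd := pdpp.1.
Let lhd_bilinear : bilinear_op lhd := pdpp.2.1.
Let succ_bilinear : bilinear_op succ := pdpp.2.2.1.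
Let prec_bilinear : bilinear_op prec := pdpp.2.2.2.1.

Let lhd_circr x y z : x ◁ (y ◁ z + y ▷ z) = (x ◁ y) ◁ z.
Proof. by have := pdpp.2.2.2.2 x y z; tauto. Qed.

Let lhdl_swap x y z : (x ◁ y) ◁ z = (y ▷ x) ◁ z.
Proof. by have := pdpp.2.2.2.2 x y z; tauto. Qed.

Let rhd_lhdA x y z : (y ▷ x) ◁ z = y ▷ (x ◁ z).
Proof. by have := pdpp.2.2.2.2 x y z; tauto. Qed.

Let rhdA x y z : x ▷ (y ▷ z) = (x ◁ y + x ▷ y) ▷ z.
Proof. by have := pdpp.2.2.2.2 x y z; tauto. Qed.

Let rhdl_swap x y z : (x ◁ y + x ▷ y) ▷ z = (y ◁ x + y ▷ x) ▷ z.
Proof. by have := pdpp.2.2.2.2 x y z; tauto. Qed.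

Let succ_brl x y z : (x ≺ y + x ≻ y) ≻ z = x ≻ (y ≻ z) - y ≻ (x ≻ z).
Proof. by have := pdpp.2.2.2.2 x y z; tauto. Qed.

Let prec_succl x y z : (x ≻ y) ≺ z = - ((y ≺ x) ≺ z).
Proof. by have := pdpp.2.2.2.2 x y z; tauto. Qed.

Let prec_brr x y z : x ≺ (y ≺ z + y ≻ z) = (x ≺ y) ≺ z + y ≻ (x ≺ z).
Proof. by have := pdpp.2.2.2.2 x y z; tauto. Qed.

Let prec_circr x y z : x ≺ (y ∘ z) = (x ≺ y) ◁ z + y ▷ (x ≺ z).
Proof. by have := pdpp.2.2.2.2 x y z; tauto. Qed.

Let succ_lhdr x y z : x ≻ (y ◁ z) = (x ≻ y) ◁ z + y ◁ ⁅x, z⁆.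
Proof. by have := pdpp.2.2.2.2 x y z; tauto. Qed.

Let succ_rhdr x y z : x ≻ (y ▷ z) = ⁅x, y⁆ ▷ z + y ▷ (x ≻ z).
Proof. by have := pdpp.2.2.2.2 x y z; tauto. Qed.

Let prec_lhdl x y z : (x ◁ y) ≺ z = x ◁ ⁅y, z⁆ + y ▷ (x ≺ z).
Proof. by have := pdpp.2.2.2.2 x y z; tauto. Qed.

Let succ_circl x y z : (x ∘ y) ≻ z = x ▷ (y ≻ z) + y ▷ (x ≻ z).
Proof. by have := pdpp.2.2.2.2 x y z; tauto. Qed.

Let precl_rhd_sub_lhd x y z : (x ▷ y - y ◁ x) ≺ z = 0.
Proof. by have := pdpp.2.2.2.2 x y z; tauto. Qed.

Let lhdl_succ_add_prec x y z : (x ≻ y + y ≺ x) ◁ z = 0.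
Proof. by have := pdpp.2.2.2.2 x y z; tauto. Qed.

Let rhdl_br_sym x y z : (x ≻ y + x ≺ y + y ≻ x + y ≺ x) ▷ z = 0.
Proof. by have := pdpp.2.2.2.2 x y z; tauto. Qed.

Lemma dual_pre_Poisson_sub_adjacent :
  dual_pre_Poisson (fun x y => x ∘ y) (fun x y => ⁅x, y⁆).
Proof.
split; first exact: bilinear_opD.
split; first exact: bilinear_opD.
move=> x y z; split; [|split; [|split; [|split; [|split]]]].
- by combine (rhdA x y z) (esym (rhd_lhdA y x z)) (lhd_circr x y z).
- by combine (rhdl_swap x y z) (lhdl_swap x y z) (esym (lhdl_swap y x z)).
- by combine (esym (succ_brl x y z)) (prec_brr x y z) (esym (prec_succl x y z))
             (esym (prec_brr y x z)).
- by combine (succ_rhdr x y z) (succ_lhdr x y z) (prec_circr x y z).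
- by combine (succ_circl x y z) (precl_rhd_sub_lhd x y z) (prec_lhdl y x z)
             (prec_lhdl x y z).
- by combine (rhdl_br_sym x y z) (lhdl_succ_add_prec x y z) (lhdl_succ_add_prec y x z).
Qed.

Lemma dpp_representation_regular :
  dpp_representation (fun x y => x ∘ y) (fun x y => ⁅x, y⁆)
    (fun x v => x ▷ v) (fun x v => v ◁ x) (fun x v => x ≻ v) (fun x v => v ≺ x).
Proof.
split; first exact: bilinear_op_lin_to_end.
split; first exact/bilinear_op_lin_to_end/bilinear_op_swap.
split; first exact: bilinear_op_lin_to_end.
split; first exact/bilinear_op_lin_to_end/bilinear_op_swap.
move=> x y v; repeat match goal with |- _ /\ _ => split end.
- by combine (esym (lhd_circr v y x)).
- by combine (lhd_circr v y x) (lhdl_swap v y x) (rhd_lhdA v y x).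
- by combine (esym (rhd_lhdA v y x)).
- by combine (esym (rhdA x y v)).
- by combine (rhdA x y v) (rhdl_swap x y v) (esym (rhdA y x v)).
- by combine (succ_brl x y v).
- by combine (prec_brr v x y).
- by combine (prec_succl y v x).
- by combine (prec_circr v x y).
- by combine (succ_lhdr x v y).
- by combine (succ_rhdr x y v).
- by combine (prec_lhdl v y x).
- by combine (succ_circl x y v).
- by combine (precl_rhd_sub_lhd y v x).
- by combine (lhdl_succ_add_prec y v x).
- by combine (rhdl_br_sym x y v).
Qed.

Section SymmetricCase.
Hypothesis lhdE : forall x y, x ◁ y = y ▷ x.
Hypothesis precE : forall x y, x ≺ y = - (y ≻ x).

Lemma pre_Poisson_succ_rhd : pre_Poisson succ rhd.
Proof.
split=> //; split=> // x y z; split; [|split; [|split]].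
- by move: (succ_brl x y z); rewrite precE => ax; combine (esym ax).
- by move: (rhdA x y z); rewrite lhdE => ax; combine ax.
- by move: (succ_rhdr x y z); rewrite precE => ax; combine (esym ax).
- by move: (succ_circl x y z); rewrite lhdE => ax; combine ax.
Qed.

End SymmetricCase.
End PreDualPrePoisson.

Theorem proposition3p26 (F : fieldType) (charF0 : [pchar F] =i pred0)
    (A : lmodType F) (rhd lhd succ prec : A -> A -> A) :
  pre_dual_pre_Poisson rhd lhd succ prec ->
  (dual_pre_Poisson (fun x y => rhd x y + lhd x y) (fun x y => succ x y + prec x y)
   /\ dpp_representation (fun x y => rhd x y + lhd x y)
        (fun x y => succ x y + prec x y)
        (fun x v => rhd x v) (fun x v => lhd v x)
        (fun x v => succ x v) (fun x v => prec v x))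
  /\ ((forall x y, lhd x y = rhd y x) -> (forall x y, prec x y = - succ y x) ->
      pre_Poisson succ rhd
      /\ Poisson (fun x y => rhd x y + rhd y x) (fun x y => succ x y - succ y x)).
Proof.
move=> pdpp; split.
  by split; [exact: dual_pre_Poisson_sub_adjacent | exact: dpp_representation_regular].
move=> lhdE precE; have preP := pre_Poisson_succ_rhd pdpp lhdE precE.
by split; [exact: preP | exact: Poisson_of_pre_Poisson].
Qed.
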